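(* Let $\mathcal H$ be a finite-dimensional Hilbert space, $W_1,\dots,W_l$ subspaces of $\mathcal H$, $\ket h\in\mathcal H$ a unit vector, and $\epsilon_j:=\|\Pi_{W_j}\ket h\|_2^2$. Let $A=(\alpha_{ij})_{i,j\in[l]}$ be a tilting matrix with $\alpha_{jj}>0$ for all $j$, and let $\mathbf W_A\le\tilde{\mathcal H}$ be the $A$-tilted span of $W_1,\dots,W_l$. Then $$\max_{j\in[l]}\epsilon_j\Big(1-\sum_{i=1}^j\alpha_{ij}\Big)\ \le\ \|\Pi_{\mathbf W_A}\ket h\|_2^2\ \le\ \Big(\sum_{j=1}^l\sqrt{\epsilon_j}\sum_{k=j}^l 2^{k-j}\alpha_{kk}^{-1/2}\Big)^2.$$ In particular, if $\alpha_{jj}\ge\alpha>0$ for all $j\in[l]$, then $\|\Pi_{\mathbf W_A}\ket h\|_2^2\le\frac{2^{2l+1}}{\alpha}\sum_{j=1}^l\epsilon_j$.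
   Context: Let $\mathcal{H}_1,\ldots,\mathcal{H}_l$ be Hilbert spaces each of dimension $\dim\mathcal{H}$, $\tilde{\mathcal{H}}:=\mathcal{H}\oplus\mathcal{H}_1\oplus\cdots\oplus\mathcal{H}_l$ (orthogonal direct sum), and $\mathcal{T}_i$ a linear map taking $\mathcal H$ isometrically onto $\mathcal H_i$. A tilting matrix is an $l\times l$ matrix $A=(\alpha_{ij})$ with $0\le\alpha_{ij}\le1$ that is upper triangular ($\alpha_{ij}=0$ for $i>j$), diagonal dominated ($\alpha_{ii}\ge\alpha_{ij}$ for all $i\le j$) and substochastic ($\sum_{i=1}^j\alpha_{ij}\le1$ for all $j$). For $j\in[l]$ define the isometric embedding $\mathcal T_{j,A}:=\sqrt{1-\sum_{i=1}^j\alpha_{ij}}\,\mathbb 1_{\mathcal H}+\sum_{i=1}^j\sqrt{\alpha_{ij}}\,\mathcal T_i:\mathcal H\to\tilde{\mathcal H}$, with $\mathbb 1_{\mathcal H}$ the identity embedding. The $A$-tilted span is $\mathbf W_A:=\sum_{j=1}^l\mathcal T_{j,A}(W_j)\le\tilde{\mathcal H}$. $\ket h$ is viewed in $\tilde{\mathcal H}$ via the identity embedding; $\Pi_X$ is orthogonal projection onto $X$. *)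

(* Finite-dimensional complex Hilbert spaces are modelled as
   row vectors 'rV[C]_n over a numClosedFieldType C (e.g. algC), with the
   standard inner product <u,v> = u *m v^* . Subspaces are row spaces of
   matrices (mxalgebra). *)
From HB Require Import structures.
From mathcomp Require Import all_boot all_order all_algebra.
Set Implicit Arguments. Unset Strict Implicit. Unset Printing Implicit Defensive.
Import Order.TTheory GRing.Theory Num.Theory.
Local Open Scope ring_scope.

Definition adjmx (C : numClosedFieldType) (m n : nat) (A : 'M[C]_(m, n)) : 'M[C]_(n, m) :=
  (map_mx Num.conj A)^T.

Definition sqnorm (C : numClosedFieldType) (n : nat) (v : 'rV[C]_n) : C :=
  (v *m adjmx v) 0 0.

(* orthogonal projection (acting on row vectors from the right) onto the
   row space of X :  P = adj(B) (B adj(B))^{-1} B  with B a basis (row_base) of X *)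
Definition orthproj (C : numClosedFieldType) (m N : nat) (X : 'M[C]_(m, N)) : 'M[C]_N :=
  adjmx (row_base X) *m invmx (row_base X *m adjmx (row_base X)) *m row_base X.

(* A tilting matrix (0-based indices, i, j : 'I_l) *)
Definition tilting (C : numClosedFieldType) (l : nat) (A : 'M[C]_l) : Prop :=
  [/\ (forall i j, 0 <= A i j <= 1),
      (forall i j : 'I_l, (j < i)%N -> A i j = 0),
      (forall i j : 'I_l, (i <= j)%N -> A i j <= A i i) &
      (forall j : 'I_l, \sum_(i < l | (i <= j)%N) A i j <= 1)].

(* The isometric embedding T_{j,A} : H -> tilde H, given the identity
   embedding E ord0 and the isometries T_i = E (lift ord0 i) onto H_i. *)
Definition tiltemb (C : numClosedFieldType) (n l N : nat)
  (E : 'I_l.+1 -> 'M[C]_(n, N)) (A : 'M[C]_l) (j : 'I_l) : 'M[C]_(n, N) :=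
  sqrtC (1 - \sum_(i < l | (i <= j)%N) A i j) *: E ord0
  + \sum_(i < l | (i <= j)%N) sqrtC (A i j) *: E (lift ord0 i).

Definition tilted_span (C : numClosedFieldType) (n l N : nat)
  (E : 'I_l.+1 -> 'M[C]_(n, N)) (A : 'M[C]_l) (W : 'I_l -> 'M[C]_n) : 'M[C]_N :=
  (\sum_(j < l) <<W j *m tiltemb E A j>>)%MS.

From HB Require Import structures.
From mathcomp Require Import all_boot all_order all_algebra.
From mathcomp Require Import zify.
Import Order.TTheory GRing.Theory Num.Theory.
Local Open Scope ring_scope.
Set Implicit Arguments. Unset Strict Implicit. Unset Printing Implicit Defensive.

(* Let v be h viewed in the summand H of tilde H and P the projection
   onto W_A.  Lower bound: (Pi_{W_j} h) T_{j,A} lies in W_A, has squared norm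
   eps_j and inner product sqrt(1 - sum_i A_ij) eps_j with v, so Cauchy-Schwarz
   against P v gives the bound.  Upper bound: write P v = sum_j T_{j,A}(w_j) with
   w_j in W_j.  Then ||P v||^2 = <v, P v> <= sum_j sqrt(eps_j) ||w_j||, while the
   H_i-component of P v has norm at most R := ||P v|| and, as A_ik <= A_ii, gives
   ||w_i|| <= R / sqrt(A_ii) + sum_{k > i} ||w_k||.  Solving this triangular
   recursion gives ||w_j|| <= R sum_{k >= j} 2^(k-j) / sqrt(A_kk), hence
   R^2 <= R K with K the claimed bound.  The uniform bound then follows from
   Cauchy-Schwarz and sum_j 4^(l-j) <= 2^(2l+1). *)

Local Notation "''[' u , v ]" := (dotmx u v) : ring_scope.
Local Notation "''[' u ]" := (dotmx u u) : ring_scope.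

Section Adjoint.
Variable C : numClosedFieldType.

Lemma adjmxM m n p (A : 'M[C]_(m, n)) (B : 'M_(n, p)) :
  adjmx (A *m B) = adjmx B *m adjmx A.
Proof. by rewrite /adjmx map_mxM trmx_mul. Qed.

Lemma adjmxK m n (A : 'M[C]_(m, n)) : adjmx (adjmx A) = A.
Proof. by apply/matrixP=> i j; rewrite !mxE conjCK. Qed.

Lemma adjmxZ m n a (A : 'M[C]_(m, n)) : adjmx (a *: A) = a^* *: adjmx A.
Proof. by apply/matrixP=> i j; rewrite !mxE rmorphM. Qed.

Lemma adjmx_sum m n (I : finType) (P : pred I) (F : I -> 'M[C]_(m, n)) :
  adjmx (\sum_(i | P i) F i) = \sum_(i | P i) adjmx (F i).
Proof.
apply/matrixP=> i j; rewrite !mxE summxE rmorph_sum summxE.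
by apply: eq_bigr => k _; rewrite !mxE.
Qed.

Lemma adjmx_inv n (A : 'M[C]_n) : adjmx (invmx A) = invmx (adjmx A).
Proof. by rewrite /adjmx map_invmx trmx_inv. Qed.

Lemma dotmx_adjmx n (u v : 'rV[C]_n) : '[u, v] = (u *m adjmx v) 0 0.
Proof. by rewrite dotmxE /adjmx map_trmx. Qed.

Lemma sqnormE n (v : 'rV[C]_n) : sqnorm v = '[v].
Proof. by rewrite dotmx_adjmx. Qed.

Lemma sqnorm_ge0 n (v : 'rV[C]_n) : 0 <= sqnorm v.
Proof. by rewrite sqnormE dnorm_ge0. Qed.

Lemma dotmxMl n k (u : 'rV[C]_n) (v : 'rV[C]_k) (M : 'M_(n, k)) :
  '[u *m M, v] = '[u, v *m adjmx M].
Proof. by rewrite !dotmx_adjmx adjmxM adjmxK mulmxA. Qed.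

Lemma dotmxZr n a (u v : 'rV[C]_n) : '[u, a *: v] = a^* * '[u, v].
Proof. by rewrite !dotmx_adjmx adjmxZ -scalemxAr mxE. Qed.

Lemma dotmx_sumr n (I : finType) (P : pred I) (u : 'rV[C]_n) (F : I -> 'rV[C]_n) :
  '[u, \sum_(i | P i) F i] = \sum_(i | P i) '[u, F i].
Proof.
rewrite dotmx_adjmx adjmx_sum mulmx_sumr summxE.
by apply: eq_bigr => i _; rewrite dotmx_adjmx.
Qed.

End Adjoint.

Section OrthogonalProjection.
Variable C : numClosedFieldType.

Lemma dnorm0_eq0 n (u : 'rV[C]_n) : '[u] = 0 -> u = 0.
Proof. by move/eqP; rewrite dnorm_eq0 => /eqP. Qed.

Lemma gram_unitmx m N (B : 'M[C]_(m, N)) : row_free B -> B *m adjmx B \in unitmx.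
Proof.
move=> freeB; rewrite -row_free_unit -kermx_eq0.
set K := kermx _.
have KB : K *m B = 0.
  apply/row_matrixP=> i; rewrite row_mul row0; apply: dnorm0_eq0.
  rewrite dotmx_adjmx adjmxM mulmxA -(mulmxA (row i K) B) -row_mul.
  by rewrite mulmx_ker row0 mul0mx mxE.
by apply/eqP/(row_free_inj freeB); rewrite KB mul0mx.
Qed.

Lemma adjmx_orthproj m N (X : 'M[C]_(m, N)) : adjmx (orthproj X) = orthproj X.
Proof.
rewrite /orthproj; move: (row_base X) => B.
by rewrite !adjmxM !adjmxK adjmx_inv adjmxM adjmxK mulmxA.
Qed.

Lemma orthproj_id m N (X : 'M[C]_(m, N)) k (w : 'M_(k, N)) :
  (w <= X)%MS -> w *m orthproj X = w.
Proof.
rewrite -(eq_row_base X) => /submxP[D ->]; rewrite -mulmxA; congr (_ *m _).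
rewrite /orthproj !mulmxA mulmxV ?mul1mx //.
exact/gram_unitmx/row_base_free.
Qed.

Lemma orthproj_sub m N (X : 'M[C]_(m, N)) k (v : 'M_(k, N)) :
  (v *m orthproj X <= X)%MS.
Proof. by rewrite /orthproj mulmxA -(eq_row_base X) submxMl. Qed.

Lemma orthproj_idem m N (X : 'M[C]_(m, N)) : orthproj X *m orthproj X = orthproj X.
Proof. by apply: orthproj_id; rewrite -[X in (X <= _)%MS]mul1mx orthproj_sub. Qed.

Lemma dnorm_orthproj m N (X : 'M[C]_(m, N)) (v : 'rV_N) :
  '[v *m orthproj X] = '[v, v *m orthproj X].
Proof. by rewrite dotmxMl adjmx_orthproj -mulmxA orthproj_idem. Qed.

Lemma dotmx_orthproj m N (X : 'M[C]_(m, N)) (v w : 'rV_N) :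
  (w <= X)%MS -> '[v *m orthproj X, w] = '[v, w].
Proof. by move=> wX; rewrite dotmxMl adjmx_orthproj orthproj_id. Qed.

Lemma dnorm_mul_coisometry_le n N (F : 'M[C]_(n, N)) (u : 'rV[C]_N) :
  F *m adjmx F = 1%:M -> '[u *m adjmx F] <= '[u].
Proof.
move=> FF; set Q := adjmx F *m F.
have QQ : Q *m Q = Q by rewrite /Q mulmxA -(mulmxA _ F) FF mulmx1.
have uFQ : '[u *m adjmx F] = '[u *m Q].
  by rewrite dotmxMl adjmxK [RHS]dotmxMl adjmxM adjmxK -(mulmxA u Q) QQ mulmxA.
have ortho : '[u *m Q, u - u *m Q] = 0.
  by rewrite dotmxMl adjmxM adjmxK mulmxBl -mulmxA QQ subrr linear0r.
have -> : '[u] = '[u *m Q + (u - u *m Q)] by rewrite addrC subrK.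
by rewrite uFQ (hnormDd ortho) lerDl dnorm_ge0.
Qed.

End OrthogonalProjection.

Section VectorNorm.
Variable C : numClosedFieldType.

Definition vnorm n (u : 'rV[C]_n) := sqrtC '[u].

Lemma vnorm_ge0 n (u : 'rV[C]_n) : 0 <= vnorm u.
Proof. by rewrite sqrtC_ge0 dnorm_ge0. Qed.

Lemma vnorm_sqr n (u : 'rV[C]_n) : vnorm u ^+ 2 = '[u].
Proof. exact: sqrtCK. Qed.

Lemma vnormD n (u v : 'rV[C]_n) : vnorm (u + v) <= vnorm u + vnorm v.
Proof. exact: (triangle_lerif (@dotmx C n) u v).1. Qed.

Lemma vnormZ n a (u : 'rV[C]_n) : vnorm (a *: u) = `|a| * vnorm u.
Proof.
by rewrite /vnorm dnormZ sqrtCM ?nnegrE ?dnorm_ge0 ?exprn_ge0 // sqrCK.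
Qed.

Lemma vnormB n (u v : 'rV[C]_n) : vnorm (u - v) <= vnorm u + vnorm v.
Proof. by rewrite -[vnorm v]mul1r -normrN1 -vnormZ scaleN1r vnormD. Qed.

Lemma vnorm_sum n (I : finType) (P : pred I) (F : I -> 'rV[C]_n) :
  vnorm (\sum_(i | P i) F i) <= \sum_(i | P i) vnorm (F i).
Proof.
apply: (big_ind2 (fun x y => vnorm x <= y)) => //.
- by rewrite /vnorm linear0l sqrtC0.
- by move=> x1 x2 y1 y2 le1 le2; apply: le_trans (vnormD _ _) (lerD le1 le2).
Qed.

Lemma dotmx_le_vnorm n (u v : 'rV[C]_n) : `|'[u, v]| <= vnorm u * vnorm v.
Proof. exact: (CauchySchwarz_sqrt (@dotmx C n) u v).1. Qed.

Lemma sqr_sum_le l (x y : 'I_l -> C) :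
  (forall j, 0 <= x j) -> (forall j, 0 <= y j) ->
  (\sum_j x j * y j) ^+ 2 <= (\sum_j x j ^+ 2) * (\sum_j y j ^+ 2).
Proof.
move=> x0 y0.
have dot_row (f g : 'I_l -> C) : (forall j, 0 <= g j) ->
    '[\row_j f j, \row_j g j] = \sum_j f j * g j.
  move=> g0; rewrite dotmx_adjmx !mxE; apply: eq_bigr => j _.
  by rewrite !mxE conj_Creal // ger0_real.
have := (CauchySchwarz (@dotmx C l) (\row_j x j) (\row_j y j)).1.
have xy0 : 0 <= \sum_j x j * y j by apply: sumr_ge0 => j _; apply: mulr_ge0.
by rewrite /= !dot_row // ger0_norm.
Qed.

End VectorNorm.

Definition tilt_coef (C : numClosedFieldType) l (A : 'M[C]_l) (j : 'I_l) (a : 'I_l.+1) : C :=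
  if unlift ord0 a is Some i then (if (i <= j)%N then sqrtC (A i j) else 0)
  else sqrtC (1 - \sum_(i < l | (i <= j)%N) A i j).

Section Tilting.
Variables (C : numClosedFieldType) (l : nat) (A : 'M[C]_l).
Hypothesis tiltA : tilting A.

Lemma tilting_ge0 (i j : 'I_l) : 0 <= A i j.
Proof. by case: tiltA => bnd _ _ _; case/andP: (bnd i j). Qed.

Lemma tilting_le_diag (i j : 'I_l) : (i <= j)%N -> A i j <= A i i.
Proof. by case: tiltA => _ _ dom _; apply: dom. Qed.

Lemma tilting_defect_ge0 (j : 'I_l) : 0 <= 1 - \sum_(i < l | (i <= j)%N) A i j.
Proof. by case: tiltA => _ _ _ sub; rewrite subr_ge0 sub. Qed.

Lemma tilt_coef0 (j : 'I_l) :
  tilt_coef A j ord0 = sqrtC (1 - \sum_(i < l | (i <= j)%N) A i j).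
Proof. by rewrite /tilt_coef unlift_none. Qed.

Lemma tilt_coef_lift (j i : 'I_l) :
  tilt_coef A j (lift ord0 i) = if (i <= j)%N then sqrtC (A i j) else 0.
Proof. by rewrite /tilt_coef liftK. Qed.

Lemma tilt_coef0_ge0 (j : 'I_l) : 0 <= tilt_coef A j ord0.
Proof. by rewrite tilt_coef0 sqrtC_ge0 tilting_defect_ge0. Qed.

Lemma tilt_coef0_le1 (j : 'I_l) : tilt_coef A j ord0 <= 1.
Proof.
rewrite tilt_coef0 -[X in _ <= X]sqrtC1 ler_sqrtC ?nnegrE ?tilting_defect_ge0 //.
by rewrite lerBlDr lerDl sumr_ge0 // => i _; apply: tilting_ge0.
Qed.

Lemma conj_tilt_coef0 (j : 'I_l) : (tilt_coef A j ord0)^* = tilt_coef A j ord0.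
Proof. by rewrite conj_Creal // ger0_real // tilt_coef0_ge0. Qed.

Lemma tilt_coef_sqnorm (j : 'I_l) : \sum_a tilt_coef A j a * (tilt_coef A j a)^* = 1.
Proof.
have sqrtC_mul_conj (x : C) : 0 <= x -> sqrtC x * (sqrtC x)^* = x.
  by move=> x0; rewrite -normCK ger0_norm ?sqrtC_ge0 ?sqrtCK.
rewrite big_ord_recl tilt_coef0 sqrtC_mul_conj ?tilting_defect_ge0 //.
rewrite [X in _ + X](_ : _ = \sum_(i < l | (i <= j)%N) A i j) ?subrK //.
rewrite [RHS]big_mkcond; apply: eq_bigr => i _; rewrite tilt_coef_lift.
by case: ifP => _; rewrite ?mul0r // sqrtC_mul_conj ?tilting_ge0.
Qed.

End Tilting.

Section OrthonormalFamily.
Variables (C : numClosedFieldType) (n l N : nat) (E : 'I_l.+1 -> 'M[C]_(n, N)).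
Hypothesis orthoE : forall a b, E a *m adjmx (E b) = (a == b)%:R%:M.

Lemma tiltembE (A : 'M[C]_l) j : tiltemb E A j = \sum_a tilt_coef A j a *: E a.
Proof.
rewrite /tiltemb big_ord_recl /tilt_coef unlift_none; congr (_ + _).
rewrite big_mkcond; apply: eq_bigr => i _; rewrite liftK.
by case: ifP => _; rewrite ?scale0r.
Qed.

Lemma comb_mul_adjmx (f : 'I_l.+1 -> C) b :
  (\sum_a f a *: E a) *m adjmx (E b) = (f b)%:M.
Proof.
rewrite mulmx_suml (bigD1 b) //= -scalemxAl orthoE eqxx scalemx1 big1 ?addr0 //.
by move=> a ab; rewrite -scalemxAl orthoE (negbTE ab) raddf0 scaler0.
Qed.

Lemma tiltemb_isometry (A : 'M[C]_l) : tilting A ->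
  forall j, tiltemb E A j *m adjmx (tiltemb E A j) = 1%:M.
Proof.
move=> tiltA j; rewrite tiltembE adjmx_sum mulmx_sumr.
rewrite -(tilt_coef_sqnorm tiltA j) raddf_sum; apply: eq_bigr => a _.
by rewrite adjmxZ -scalemxAr comb_mul_adjmx scale_scalar_mx mulrC.
Qed.

End OrthonormalFamily.

Lemma sum_expn2_tail_lt l j :
  (\sum_(k < l | (j <= k)%N) 2 ^ (k - j) < 2 ^ (l - j))%N.
Proof.
elim: l => [|l IH]; first by rewrite big_ord0 sub0n.
rewrite big_mkcond big_ord_recr /= -big_mkcond /=.
case: (leqP j l) => [jl|lj]; first by rewrite subSn // expnS mul2n -addnn ltn_add2r.
have -> : (l.+1 - j = l - j)%N by lia.
by rewrite addn0.
Qed.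

Lemma sum_sqr_expn2_le l : (\sum_(j < l) (2 ^ (l - j)) ^ 2 <= 2 ^ (2 * l + 1))%N.
Proof.
elim: l => [|l IH]; first by rewrite big_ord0.
rewrite big_ord_recl /= subn0.
under eq_bigr do rewrite /bump /= add1n subSS.
have e1 : ((2 ^ l.+1) ^ 2 = 4 * 2 ^ (2 * l))%N.
  by rewrite -expnM -[4%N]/(2 ^ 2)%N -expnD; congr (_ ^ _)%N; lia.
have e2 : (2 ^ (2 * l + 1) = 2 * 2 ^ (2 * l))%N by rewrite expnD mulnC.
have e3 : (2 ^ (2 * l.+1 + 1) = 8 * 2 ^ (2 * l))%N.
  by rewrite -[8%N]/(2 ^ 3)%N -expnD; congr (_ ^ _)%N; lia.
rewrite e1 e3; apply: leq_trans (leq_add (leqnn _) IH) _; lia.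
Qed.

Lemma big_geq_ord (V : nmodType) l (F : 'I_l -> V) (i : 'I_l) :
  \sum_(k < l | (i <= k)%N) F k = F i + \sum_(k < l | (i < k)%N) F k.
Proof.
rewrite (bigD1 i) //=; congr (_ + _); apply: eq_bigl => k.
by rewrite ltn_neqAle andbC eq_sym.
Qed.

Lemma big_geq_out (V : nmodType) l (F : 'I_l -> V) (i : nat) :
  (l <= i)%N -> \sum_(k < l | (i <= k)%N) F k = 0.
Proof.
move=> li; rewrite big_pred0 // => k.
by apply/negbTE; rewrite -ltnNge (leq_trans (ltn_ord k) li).
Qed.

Section GeometricWeight.
Variables (C : numClosedFieldType) (l : nat).

Definition geom_weight (a : 'I_l -> C) (j : nat) :=
  \sum_(k < l | (j <= k)%N) 2%:R ^+ (k - j) / a k.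

Lemma geom_weight_ge0 (a : 'I_l -> C) j : (forall k, 0 <= a k) -> 0 <= geom_weight a j.
Proof. by move=> a0; apply: sumr_ge0 => k _; rewrite divr_ge0 ?exprn_ge0 ?ler0n. Qed.

Lemma geom_weight_rec (a : 'I_l -> C) (i : 'I_l) :
  geom_weight a i = (a i)^-1 + 2%:R * geom_weight a i.+1.
Proof.
rewrite /geom_weight big_geq_ord subnn expr0 mul1r mulr_sumr; congr (_ + _).
by apply: eq_bigr => k ik; rewrite mulrA -exprS subnSK.
Qed.

Lemma geom_weight_le (d : 'I_l -> C) (alpha : C) : 0 < alpha -> (forall k, alpha <= d k) ->
  forall j : 'I_l, geom_weight (fun k => sqrtC (d k)) j <= (2 ^ (l - j))%N%:R / sqrtC alpha.
Proof.
move=> alpha0 le_alpha j.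
have salpha0 : 0 < sqrtC alpha by rewrite sqrtC_gt0.
apply: (@le_trans _ _ ((\sum_(k < l | (j <= k)%N) 2%:R ^+ (k - j)) / sqrtC alpha)).
  rewrite mulr_suml; apply: ler_sum => k _; apply: ler_wpM2l; first exact: exprn_ge0.
  have dk0 : 0 < d k by apply: lt_le_trans (le_alpha k).
  rewrite lef_pV2 ?posrE ?sqrtC_gt0 //.
  by rewrite ler_sqrtC ?nnegrE ?le_alpha ?(ltW alpha0) ?(ltW dk0).
apply: ler_wpM2r; first by rewrite invr_ge0 (ltW salpha0).
rewrite (_ : \sum_(k < l | _) _ = (\sum_(k < l | (j <= k)%N) 2 ^ (k - j))%N%:R).
  by rewrite ler_nat ltnW ?sum_expn2_tail_lt.
by rewrite natr_sum; apply: eq_bigr => k _; rewrite natrX.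
Qed.

Lemma sqr_weighted_geom_le (d eps : 'I_l -> C) (alpha : C) :
  0 < alpha -> (forall k, alpha <= d k) -> (forall j, 0 <= eps j) ->
  (\sum_(j < l) sqrtC (eps j) * geom_weight (fun k => sqrtC (d k)) j) ^+ 2
    <= 2%:R ^+ (2 * l + 1)%N / alpha * \sum_(j < l) eps j.
Proof.
move=> alpha0 le_alpha eps0.
pose g (j : 'I_l) : C := (2 ^ (l - j))%N%:R.
pose S := \sum_j sqrtC (eps j) * g j.
have S0 : 0 <= S by apply: sumr_ge0 => j _; rewrite mulr_ge0 ?sqrtC_ge0 ?ler0n.
pose K := \sum_j sqrtC (eps j) * geom_weight (fun k => sqrtC (d k)) j.
have K0 : 0 <= K.
  apply: sumr_ge0 => j _; rewrite mulr_ge0 ?sqrtC_ge0 // geom_weight_ge0 // => k.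
  by rewrite sqrtC_ge0 (le_trans (ltW alpha0)).
have le_S : K <= S / sqrtC alpha.
  rewrite mulr_suml; apply: ler_sum => j _; rewrite -mulrA.
  by rewrite ler_wpM2l ?sqrtC_ge0 ?geom_weight_le.
have sum_g : \sum_j g j ^+ 2 <= 2%:R ^+ (2 * l + 1)%N.
  rewrite -natrX (_ : \sum_j _ = (\sum_(j < l) (2 ^ (l - j)) ^ 2)%N%:R).
    by rewrite ler_nat sum_sqr_expn2_le.
  by rewrite natr_sum; apply: eq_bigr => j _; rewrite natrX.
have CS : S ^+ 2 <= (\sum_j eps j) * \sum_j g j ^+ 2.
  under [\sum_j eps j]eq_bigr do rewrite -[eps _]sqrtCK.
  by apply: sqr_sum_le => j; rewrite ?sqrtC_ge0 ?ler0n.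
apply: (@le_trans _ _ ((S / sqrtC alpha) ^+ 2)).
  by rewrite ler_pXn2r ?nnegrE ?divr_ge0 ?sqrtC_ge0 ?(ltW alpha0).
rewrite exprMn exprVn sqrtCK [X in _ <= X]mulrAC ler_wpM2r ?invr_ge0 ?(ltW alpha0) //.
by apply: le_trans CS _; rewrite mulrC ler_wpM2r ?sumr_ge0.
Qed.

Section BackwardRecursion.
Variables (a x : 'I_l -> C) (R : C).
Hypothesis x_ge0 : forall i, 0 <= x i.
Hypothesis x_rec : forall i : 'I_l, x i <= R / a i + \sum_(k < l | (i < k)%N) x k.

Lemma tail_sum_le_geom_weight d : forall i : nat, (l - i <= d)%N ->
  \sum_(k < l | (i <= k)%N) x k <= R * geom_weight a i.
Proof.
elim: d => [|d IH] i lid.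
  by rewrite /geom_weight !big_geq_out ?mulr0 //; lia.
case: (leqP l i) => [li|il]; first by rewrite /geom_weight !big_geq_out ?mulr0.
have IHi : \sum_(k < l | (i < k)%N) x k <= R * geom_weight a i.+1 by apply: IH; lia.
have -> : i = Ordinal il by [].
rewrite big_geq_ord geom_weight_rec mulrDr mulrCA mulr_natl mulr2n.
apply: le_trans (lerD (x_rec _) (lexx _)) _.
by rewrite -addrA lerD // lerD.
Qed.

Lemma le_geom_weight (i : 'I_l) : x i <= R * geom_weight a i.
Proof.
apply: le_trans (tail_sum_le_geom_weight (leqnn _)).
by rewrite big_geq_ord lerDl sumr_ge0.
Qed.

End BackwardRecursion.
End GeometricWeight.

Section TiltedSpan.
Variables (C : numClosedFieldType) (n l N : nat) (E : 'I_l.+1 -> 'M[C]_(n, N)).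
Hypothesis orthoE : forall a b, E a *m adjmx (E b) = (a == b)%:R%:M.
Variables (W : 'I_l -> 'M[C]_n) (h : 'rV[C]_n) (A : 'M[C]_l).
Hypothesis tiltA : tilting A.

Local Notation T := (tiltemb E A).
Local Notation X := (tilted_span E A W).
Local Notation emb_h := (h *m E ord0).
Local Notation proj_h := (emb_h *m orthproj X).
Local Notation eps j := (sqnorm (h *m orthproj (W j))).

Lemma dotmx_emb_tiltemb j (y : 'rV_n) : '[emb_h, y *m T j] = tilt_coef A j ord0 * '[h, y].
Proof.
by rewrite dotmxMl -mulmxA tiltembE comb_mul_adjmx // mul_mx_scalar dotmxZr conj_tilt_coef0.
Qed.

Lemma sum_tiltemb_mul_adjmx (w : 'I_l -> 'rV_n) (i : 'I_l) :
  (\sum_k w k *m T k) *m adjmx (E (lift ord0 i))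
    = \sum_(k < l | (i <= k)%N) sqrtC (A i k) *: w k.
Proof.
rewrite mulmx_suml [RHS]big_mkcond; apply: eq_bigr => k _.
rewrite -mulmxA tiltembE comb_mul_adjmx // mul_mx_scalar tilt_coef_lift.
by case: ifP => _; rewrite ?scale0r.
Qed.

Lemma tilted_span_lower_bound j :
  eps j * (1 - \sum_(i < l | (i <= j)%N) A i j) <= sqnorm proj_h.
Proof.
set y := h *m orthproj (W j); set w := y *m T j; set c := tilt_coef A j ord0.
have wX : (w <= X)%MS.
  by apply: (sumsmx_sup j) => //; rewrite genmxE submxMr // orthproj_sub.
have hw : '[proj_h, w] = c * '[y].
  by rewrite dotmx_orthproj // dotmx_emb_tiltemb dnorm_orthproj.
have ww : '[w] = '[y].
  by rewrite dotmxMl -mulmxA tiltemb_isometry // mulmx1.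
have := (CauchySchwarz (@dotmx C _) proj_h w).1; rewrite /= hw ww.
have c0 : 0 <= c by apply: tilt_coef0_ge0.
rewrite !sqnormE -[1 - _]sqrtCK -tilt_coef0 -/c ger0_norm ?mulr_ge0 ?dnorm_ge0 //.
have [->|y0] := eqVneq '[y] 0; first by rewrite mul0r dnorm_ge0.
have y_gt0 : 0 < '[y] by rewrite lt_def y0 dnorm_ge0.
by move=> CS; rewrite -(ler_pM2r y_gt0) mulrAC -expr2 mulrC -exprMn.
Qed.

Lemma tilted_span_decomposition :
  exists2 w : 'I_l -> 'rV_n, (forall j, (w j <= W j)%MS) & proj_h = \sum_j w j *m T j.
Proof.
have /sub_sumsmxP[u projE] : (proj_h <= X)%MS by apply: orthproj_sub.
exists (fun j => u j *m <<W j *m T j>>%MS *m pinvmx (W j *m T j) *m W j).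
  by move=> j; rewrite submxMl.
rewrite projE; apply: eq_bigr => j _; rewrite -mulmxA mulmxKpV //.
by rewrite (submx_trans (submxMl _ _)) ?genmxE.
Qed.

Lemma tilted_proj_dnorm_le (w : 'I_l -> 'rV_n) :
  (forall j, (w j <= W j)%MS) -> proj_h = \sum_j w j *m T j ->
  sqnorm proj_h <= \sum_j sqrtC (eps j) * vnorm (w j).
Proof.
move=> wW projE.
have expand : '[proj_h] = \sum_j tilt_coef A j ord0 * '[h *m orthproj (W j), w j].
  rewrite dnorm_orthproj projE dotmx_sumr; apply: eq_bigr => j _.
  by rewrite dotmx_emb_tiltemb dotmx_orthproj.
rewrite sqnormE -[X in X <= _]ger0_norm ?dnorm_ge0 // expand.
apply: le_trans (ler_norm_sum _ _ _) _; apply: ler_sum => j _.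
rewrite normrM sqnormE -[X in _ <= X]mul1r ler_pM ?normr_ge0 ?dotmx_le_vnorm //.
by rewrite ger0_norm ?tilt_coef0_le1 ?tilt_coef0_ge0.
Qed.

Lemma tilted_norm_recursion (w : 'I_l -> 'rV_n) : (forall j, 0 < A j j) ->
  proj_h = \sum_j w j *m T j ->
  forall i : 'I_l, vnorm (w i)
    <= vnorm proj_h / sqrtC (A i i) + \sum_(k < l | (i < k)%N) vnorm (w k).
Proof.
move=> diag_gt0 projE i.
set a := sqrtC (A i i); set rest := \sum_(k < l | (i < k)%N) sqrtC (A i k) *: w k.
have a_gt0 : 0 < a by rewrite sqrtC_gt0.
have comp : proj_h *m adjmx (E (lift ord0 i)) = a *: w i + rest.
  by rewrite projE sum_tiltemb_mul_adjmx big_geq_ord.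
have comp_le : vnorm (a *: w i + rest) <= vnorm proj_h.
  rewrite -comp ler_sqrtC ?nnegrE ?dnorm_ge0 //.
  by rewrite dnorm_mul_coisometry_le // orthoE eqxx.
have rest_le : vnorm rest <= a * \sum_(k < l | (i < k)%N) vnorm (w k).
  apply: le_trans (vnorm_sum _ _) _; rewrite mulr_sumr; apply: ler_sum => k ik.
  rewrite vnormZ ger0_norm ?sqrtC_ge0 ?tilting_ge0 // ler_wpM2r ?vnorm_ge0 //.
  by rewrite ler_sqrtC ?nnegrE ?tilting_ge0 // tilting_le_diag // ltnW.
have aw : a * vnorm (w i) = vnorm (a *: w i + rest - rest).
  by rewrite addrK vnormZ ger0_norm ?ltW.
rewrite -(ler_pM2l a_gt0) mulrDr mulrCA divff ?gt_eqF // mulr1 aw.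
exact: le_trans (vnormB _ _) (lerD comp_le rest_le).
Qed.

Lemma tilted_span_upper_bound : (forall j, 0 < A j j) ->
  sqnorm proj_h
    <= (\sum_(j < l) sqrtC (eps j) * geom_weight (fun k => sqrtC (A k k)) j) ^+ 2.
Proof.
move=> diag_gt0; have [w wW projE] := tilted_span_decomposition.
set R := vnorm proj_h; set K := \sum_(j < l) _.
have w_le j : vnorm (w j) <= R * geom_weight (fun k => sqrtC (A k k)) j.
  apply: (le_geom_weight (x := fun k => vnorm (w k))) => [k|]; first exact: vnorm_ge0.
  exact: tilted_norm_recursion.
have K0 : 0 <= K.
  apply: sumr_ge0 => j _; rewrite mulr_ge0 ?sqrtC_ge0 ?sqnorm_ge0 ?geom_weight_ge0 // => k.
  by rewrite sqrtC_ge0 (ltW (diag_gt0 k)).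
have RK : R ^+ 2 <= R * K.
  rewrite vnorm_sqr -sqnormE; apply: le_trans (tilted_proj_dnorm_le wW projE) _.
  rewrite /K mulr_sumr; apply: ler_sum => j _; rewrite mulrCA.
  by rewrite ler_wpM2l ?sqrtC_ge0 ?sqnorm_ge0.
rewrite sqnormE -vnorm_sqr -/R.
have [->|R0] := eqVneq R 0; first by rewrite expr0n exprn_ge0.
have R_gt0 : 0 < R by rewrite lt_def R0 vnorm_ge0.
by rewrite ler_pXn2r ?nnegrE ?vnorm_ge0 // -(ler_pM2l R_gt0) -expr2.
Qed.

End TiltedSpan.

Unset Implicit Arguments.

Theorem proposition3 (C : numClosedFieldType) (n l : nat)
  (E : 'I_l.+1 -> 'M[C]_(n, n * l.+1))
  (hE : forall a b, E a *m adjmx (E b) = (a == b)%:R%:M)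
  (W : 'I_l -> 'M[C]_n) (h : 'rV[C]_n) (hh : sqnorm h = 1)
  (A : 'M[C]_l) (hA : tilting A) (hdiag : forall j, 0 < A j j) :
  let eps j := sqnorm (h *m orthproj (W j)) in
  let p := sqnorm ((h *m E ord0) *m orthproj (tilted_span E A W)) in
  [/\ (forall j : 'I_l, eps j * (1 - \sum_(i < l | (i <= j)%N) A i j) <= p),
      p <= (\sum_(j < l) sqrtC (eps j) *
              \sum_(k < l | (j <= k)%N) 2%:R ^+ (k - j)%N / sqrtC (A k k)) ^+ 2 &
      (forall alpha : C, 0 < alpha -> (forall j, alpha <= A j j) ->
         p <= 2%:R ^+ (2 * l + 1)%N / alpha * \sum_(j < l) eps j)].
Proof.
move=> eps p.
have upper := tilted_span_upper_bound hE W h hA hdiag.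
split=> [j|//|alpha alpha0 le_alpha]; first exact: tilted_span_lower_bound.
apply: le_trans upper _; apply: sqr_weighted_geom_le => // j.
exact: sqnorm_ge0.
Qed.
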